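(* Let $\Gamma$ be a countably infinite group acting minimally and continuously on a compact metrizable space $X$ with more than one orbit, let $x_1\in X$ have trivial stabilizer, and let $f:X\setminus\{x_1\}\to\{1,-1\}$ be continuous and not continuously extendable to $X$. Let $\pi_f:X_f\to X$ be the McMahon extension with continuous function $\tilde f:X_f\to\{1,-1\}$, and set $X_{f,+}=\tilde f^{-1}(1)$, $X_{f,-}=\tilde f^{-1}(-1)$. Then $\Gamma\curvearrowright X_f$ is null if and only if $\Gamma\curvearrowright X$ is null and the pair $(X_{f,+},X_{f,-})$ does not have arbitrarily large finite independence sets.
   Context: McMahon extension: $\Gamma\curvearrowright X_f$ is a minimal continuous action on a compact metrizable space with a $\Gamma$-equivariant continuous surjection $\pi_f:X_f\to X$ such that $\pi_f^{-1}(x)$ is a single point for $x\notin\Gamma x_1$ and two points for $x\in\Gamma x_1$, and $\tilde f$ is the continuous extension to $X_f$ of $f\circ\pi_f$ on $X_f\setminus\pi_f^{-1}(x_1)$; this extension is unique up to conjugacy (constructed as the quotient of the Stone–Čech compactification $W$ of an orbit $\Gamma x_0$, $x_0\notin\Gamma x_1$, by $w_1\sim w_2$ iff they have the same image in $X$ and $f_W(sw_1)=f_W(sw_2)$ for all $s$, $f_W$ the extension of $f$). A set $M\subseteq\Gamma$ is an independence set for $(A_1,A_2)$ if $\bigcap_{s\in F}s^{-1}A_{\omega(s)}\ne\emptyset$ for every nonempty finite $F\subseteq M$ and $\omega\in\{1,2\}^F$. Null: every sequence entropy $\limsup_n\frac1n\log N(\bigvee_{i=1}^n s_i^{-1}\mathcal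 U)$ vanishes, for all sequences $\{s_n\}\subseteq\Gamma$ and finite open covers $\mathcal U$. *)

From HB Require Import structures.
From mathcomp Require Import all_boot all_order all_algebra.
From mathcomp Require Import monoid.
From mathcomp Require Import all_classical all_reals all_analysis.
Set Implicit Arguments. Unset Strict Implicit. Unset Printing Implicit Defensive.
Import Order.TTheory GRing.Theory Num.Theory.
Import numFieldNormedType.Exports.
Local Open Scope classical_set_scope.
Local Open Scope ring_scope.

Definition is_action (G : groupType) (X : Type) (act : G -> X -> X) :=
  (forall x, act 1%g x = x) /\ (forall g h x, act (g * h)%g x = act g (act h x)).

Definition continuous_action (G : groupType) (X : topologicalType)
  (act : G -> X -> X) := is_action act /\ forall g, continuous (act g).

Definition act_orbit (G : groupType) (X : Type) (act : G -> X -> X) (x : X) : set X :=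
  [set act g x | g in [set: G]].

Definition minimal_action (G : groupType) (X : topologicalType)
  (act : G -> X -> X) := forall x : X, closure (act_orbit act x) = [set: X].

Definition subcover_sizes (R : realType) (T : Type) (V : set (set T)) : set R :=
  [set (size W)%:R | W in [set W : seq (set T) |
     (forall i, (i < size W)%N -> V (nth set0 W i)) /\
     (forall y, exists2 i, (i < size W)%N & nth set0 W i y)]].

Definition covnum (R : realType) (T : Type) (V : set (set T)) : R :=
  inf (@subcover_sizes R T V).

(* The join  \bigvee_{i < n} s_i^{-1} U  of the finite cover U
   (given as a finite list of sets) along the sequence s. *)
Definition join_cover (G : groupType) (T : Type) (act : G -> T -> T)
  (s : nat -> G) (U : seq (set T)) (n : nat) : set (set T) :=
  [set A | exists j : nat -> nat,
     (forall i, (i < n)%N -> (j i < size U)%N) /\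
     A = [set y | forall i, (i < n)%N -> nth set0 U (j i) (act (s i) y)]].

Definition seq_entropy (R : realType) (G : groupType) (T : Type)
  (act : G -> T -> T) (s : nat -> G) (U : seq (set T)) : \bar R :=
  limn_esup (fun n => ((ln (@covnum R T (join_cover act s U n))) / n%:R)%:E).

Definition finite_open_cover (T : topologicalType) (U : seq (set T)) :=
  (forall i, (i < size U)%N -> open (nth set0 U i)) /\
  (forall y, exists2 i, (i < size U)%N & nth set0 U i y).

Definition null_action (R : realType) (G : groupType) (T : topologicalType)
  (act : G -> T -> T) :=
  forall (s : nat -> G) (U : seq (set T)), finite_open_cover U ->
    @seq_entropy R G T act s U = 0%E.

Definition indep_set (G : groupType) (T : Type) (act : G -> T -> T)
  (A1 A2 : set T) (M : set G) :=
  forall F : set G, finite_set F -> F !=set0 -> F `<=` M ->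
    forall omega : G -> bool,
      exists y : T, forall s, F s -> (if omega s then A1 else A2) (act s y).

Definition arb_large_indep (G : groupType) (T : Type) (act : G -> T -> T)
  (A1 A2 : set T) :=
  forall n : nat, exists M : seq G,
    uniq M /\ (n <= size M)%N /\ indep_set act A1 A2 [set g | g \in M].

From HB Require Import structures.
From mathcomp Require Import all_boot all_order all_algebra.
From mathcomp Require Import monoid.
From mathcomp Require Import all_classical all_reals all_analysis.
From mathcomp Require Import ring lra zify.
Import Order.TTheory GRing.Theory Num.Theory.
Import numFieldNormedType.Exports.
Set Implicit Arguments. Unset Strict Implicit. Unset Printing Implicit Defensive.

(* Forward direction: X is a factor of X_f, and an independence set of size 2^k for
   the clopen partition {ft = 1}, {ft = -1} forces 2^(2^k) cells in the join along
   it, so along the concatenation of such sets the sequence entropy is >= ln 2 / 2.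
   Backward direction: every fibre of pif is separated by ft . g for a single g (over
   g x1 because ft differs on the two points, otherwise f would extend continuously),
   so an open cover U of X_f is refined, above a finite open cover V of X, by the sign
   of ft at finitely many group elements.  The join of U along s_1 .. s_n thus has at
   most N(join of V) times the number of sign patterns of a point along the at most
   |V| n elements g s_i, and without independence sets of size d the Sauer-Shelah lemma
   bounds that number by (|V| n + 1)^d, which is subexponential. *)

Section SauerShelah.
Variable T : finType.
Implicit Types (S : {set {ffun T -> bool}}) (I : {set T}).

Definition shatters S I :=
  [forall w : {ffun T -> bool}, [exists h in S, [forall i in I, h i == w i]]].

Definition shattered S := [set I | shatters S I].

Lemma shattersS S1 S2 I : S1 \subset S2 -> shatters S1 I -> shatters S2 I.
Proof.
move=> sS12 /forallP shI; apply/forallP => w; have /existsP[h /andP[hS hI]] := shI w.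
by apply/existsP; exists h; rewrite (fintype.subsetP sS12).
Qed.

Lemma shatters_set0 S : S != finset.set0 -> shatters S finset.set0.
Proof.
case/set0Pn => h hS; apply/forallP => w; apply/existsP; exists h.
by rewrite hS; apply/forallP => i; rewrite inE.
Qed.

Definition slice S (x : T) (b : bool) := [set h in S | h x == b].

Lemma card_slices S x : #|S| = #|slice S x false| + #|slice S x true|.
Proof.
rewrite -cardsUI (_ : _ :&: _ = finset.set0) ?cards0 ?addn0.
  by apply: eq_card => h; rewrite !inE; case: (h x); rewrite ?andbT ?andbF ?orbF.
by apply/finset.setP => h; rewrite !inE; case: (h x); rewrite ?andbF.
Qed.

Lemma shatters_slice_notin S x b I : shatters (slice S x b) I -> x \notin I.
Proof.
move=> /forallP /(_ [ffun=> ~~ b]) /existsP[h /andP[]].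
rewrite inE => /andP[_ /eqP hx] /forallP /(_ x).
by rewrite ffunE hx; case: b {hx}; case: (x \in I).
Qed.

Lemma shatters_slices_setU1 S x I :
  shatters (slice S x false) I -> shatters (slice S x true) I -> shatters S (x |: I).
Proof.
move=> sh0 sh1; apply/forallP => w.
have /forallP /(_ w) /existsP[h /andP[]] := if w x then sh1 else sh0.
rewrite inE => /andP[hS /eqP hx] /forallP hI.
apply/existsP; exists h; rewrite hS; apply/forallP => i; rewrite !inE.
by case: eqP => [->|_] /=; [rewrite hx; case: (w x) | exact: hI].
Qed.

Lemma card_shattered_slices S x :
  #|shattered (slice S x false)| + #|shattered (slice S x true)| <= #|shattered S|.
Proof.
pose Sh b := shattered (slice S x b).
have notin b I : I \in Sh b -> x \notin I by rewrite inE; apply: shatters_slice_notin.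
pose J := (Sh false :|: Sh true) :|: [set x |: I | I in Sh false :&: Sh true].
have -> : #|Sh false| + #|Sh true| = #|J|.
  rewrite cardsU (_ : (Sh false :|: Sh true) :&: _ = finset.set0) ?cards0 ?subn0.
    rewrite card_in_imset ?cardsUI // => I1 I2 /setIP[/notin x1 _] /setIP[/notin x2 _] e.
    by rewrite -(setU1K x1) -(setU1K x2) e.
  apply/finset.setP => I; rewrite !inE; apply/negbTE/negP => /andP[sh /imsetP[I0 _ EI]].
  by case/orP: sh => /shatters_slice_notin; rewrite EI setU11.
apply/subset_leq_card/fintype.subsetP => I; rewrite !inE => /orP[/orP[]|].
- by apply: shattersS; apply/fintype.subsetP => h; rewrite inE => /andP[].
- by apply: shattersS; apply/fintype.subsetP => h; rewrite inE => /andP[].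
by case/imsetP => I0; rewrite !inE => /andP[sh0 sh1] ->; apply: shatters_slices_setU1.
Qed.

Lemma card_le_shattered S : #|S| <= #|shattered S|.
Proof.
move: {2}#|S| (leqnn #|S|) => n; elim: n S => [|n IH] S.
  by rewrite leqn0 => /eqP ->.
move=> Sn; have [S1|S2] := leqP #|S| 1.
  case: (posnP #|S|) => [->//|S0]; apply: (leq_trans S1); rewrite card_gt0.
  apply/set0Pn; exists finset.set0; rewrite inE; apply: shatters_set0.
  by rewrite -card_gt0.
have [f [g [fS gS fg]]] : exists f g, [/\ f \in S, g \in S & f != g].
  have [f fS] : exists f, f \in S by apply/set0Pn; rewrite -card_gt0 (ltn_trans _ S2).
  have /set0Pn[g] : S :\ f != finset.set0.
    by rewrite -card_gt0; rewrite (cardsD1 f) fS in S2.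
  by rewrite !inE => /andP[gf gS]; exists f, g; rewrite eq_sym.
have [x fgx] : exists x, f x != g x.
  by apply/existsP; apply: contraNT fg; rewrite negb_exists => /forallP fg;
    apply/eqP/ffunP => x; apply/eqP; rewrite -[_ == _]negbK fg.
have slice_lt b : #|slice S x b| < #|S|.
  have : 0 < #|slice S x (~~ b)|.
    rewrite card_gt0; apply/set0Pn; have [h hS hx] : exists2 h, h \in S & h x = ~~ b.
      by case: b; case Hf: (f x) fgx; case Hg: (g x) => // _; first [by exists f | by exists g].
    by exists h; rewrite inE hS hx eqxx.
  rewrite (card_slices S x); case: b => /=; lia.
have IHb b : #|slice S x b| <= #|shattered (slice S x b)|.
  by apply: IH; rewrite -ltnS (leq_trans (slice_lt b) Sn).
rewrite (card_slices S x) (leq_trans (leq_add (IHb false) (IHb true))) //.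
exact: card_shattered_slices.
Qed.

Lemma card_small_sets d : #|[set I : {set T} | #|I| <= d]| <= (#|T|.+1) ^ d.
Proof.
pose F (I : {set T}) : {ffun 'I_d -> option T} :=
  [ffun k : 'I_d => nth None (map Some (enum I)) k].
have FK I : #|I| <= d -> I = [set i | Some i \in codom (F I)].
  move=> cI; apply/finset.setP => i; rewrite inE; apply/idP/idP.
    move=> iI; apply/codomP.
    have ii : index i (enum I) < d by rewrite (leq_trans _ cI) // cardE index_mem mem_enum.
    exists (Ordinal ii); rewrite ffunE /= (nth_map i) ?nth_index ?mem_enum //.
    by rewrite index_mem mem_enum.
  case/codomP => k; rewrite ffunE.
  have [lt|ge] := ltnP k (size (enum I)).
    by rewrite (nth_map i) // => -[->]; rewrite -mem_enum mem_nth.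
  by rewrite nth_default // size_map.
have Finj : {in [set I : {set T} | #|I| <= d] &, injective F}.
  by move=> I1 I2; rewrite !inE => c1 c2 e; rewrite (FK _ c1) (FK _ c2) e.
rewrite -(card_in_imset Finj) (leq_trans (max_card _)) //.
by rewrite card_ffun card_option card_ord.
Qed.

Lemma sauer_shelah S d : (forall I, shatters S I -> #|I| < d) -> #|S| <= (#|T|.+1) ^ d.
Proof.
move=> small; rewrite (leq_trans (card_le_shattered S)) // (leq_trans _ (card_small_sets d)) //.
by apply/subset_leq_card/fintype.subsetP => I; rewrite !inE => /small /ltnW.
Qed.

End SauerShelah.

Local Open Scope classical_set_scope.
Local Open Scope ring_scope.

Definition covers (T : Type) (U : seq (set T)) :=
  forall y, exists2 i, (i < size U)%N & nth set0 U i y.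

Definition is_subcover (T : Type) (V : set (set T)) (W : seq (set T)) :=
  (forall i, (i < size W)%N -> V (nth set0 W i)) /\ covers W.

Definition join_cell (G : groupType) (T : Type) (act : G -> T -> T) (s : nat -> G)
    (U : seq (set T)) (n : nat) (k : nat -> nat) : set T :=
  [set y | forall i, (i < n)%N -> nth set0 U (k i) (act (s i) y)].

Section CoveringNumbers.
Context {R : realType}.

Lemma covnum_ge (T : Type) (V : set (set T)) (K : nat) :
  (exists W, is_subcover V W) -> (forall W, is_subcover V W -> (K <= size W)%N) ->
  K%:R <= covnum R V.
Proof.
move=> [W0 hW0] geK; apply: lb_le_inf; first by exists (size W0)%:R; exists W0.
by move=> _ [W hW <-]; rewrite ler_nat; exact: geK.
Qed.

Lemma covnum_ge1 (T : Type) (t : T) (V : set (set T)) :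
  (exists W, is_subcover V W) -> 1 <= covnum R V.
Proof.
move=> exW; apply: (covnum_ge (K := 1)) => // W [_ /(_ t) [i iW _]].
exact: leq_ltn_trans iW.
Qed.

Lemma covnum_le_mul (T1 T2 : Type) (V1 : set (set T1)) (V2 : set (set T2)) (c : nat) :
  (0 < c)%N -> (exists W, is_subcover V1 W) ->
  (forall W, is_subcover V1 W ->
     exists2 W', is_subcover V2 W' & (size W' <= c * size W)%N) ->
  covnum R V2 <= c%:R * covnum R V1.
Proof.
move=> c0 [W0 hW0] refine; have c0R : 0 < c%:R :> R by rewrite ltr0n.
rewrite -ler_pdivrMl //; apply: lb_le_inf; first by exists (size W0)%:R; exists W0.
move=> _ [W hW <-]; have [W' hW' le] := refine W hW.
rewrite ler_pdivrMl // -natrM; apply: le_trans (_ : (size W')%:R <= _); last by rewrite ler_nat.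
by apply: ge_inf; [exists 0 => _ [? _ <-]; exact: ler0n | exists W'].
Qed.

Section Joins.
Variables (G : groupType) (T : Type) (act : G -> T -> T) (s : nat -> G).

Lemma join_cell_in (U : seq (set T)) n k : (forall i, (i < n)%N -> (k i < size U)%N) ->
  join_cover act s U n (join_cell act s U n k).
Proof. by move=> kU; exists k. Qed.

Lemma join_cover_subcover (U : seq (set T)) n : covers U ->
  exists W, is_subcover (join_cover act s U n) W.
Proof.
move=> cU; pose idx (h : {ffun 'I_n -> 'I_(size U)}) (i : nat) : nat :=
  oapp (fun i' : 'I_n => nat_of_ord (h i')) 0%N (insub i).
have idxE h i (lt : (i < n)%N) : idx h i = h (Ordinal lt) by rewrite /idx insubT.
set e := enum {ffun 'I_n -> 'I_(size U)}.
exists [seq join_cell act s U n (idx h) | h <- e]; split.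
  move=> a; rewrite size_map => lt; case E: e lt => [//|h0 t] lt; rewrite -E in lt *.
  by rewrite (nth_map h0) //; apply: join_cell_in => i ilt; rewrite idxE.
move=> y; have /choice[phi Hphi] : forall i, exists k, (k < size U)%N /\ nth set0 U k (act (s i) y).
  by move=> i; have [k] := cU (act (s i) y); exists k.
pose h := [ffun i : 'I_n => Ordinal (Hphi i).1].
have he : h \in e by rewrite mem_enum.
exists (index h e); first by rewrite size_map index_mem.
rewrite (nth_map h) ?index_mem // nth_index // => i lt.
by rewrite idxE ffunE; exact: (Hphi i).2.
Qed.

Lemma subcover_join_cells (U : seq (set T)) n W : is_subcover (join_cover act s U n) W ->
  exists k : nat -> nat -> nat, forall a, (a < size W)%N ->
    (forall i, (i < n)%N -> (k a i < size U)%N) /\ nth set0 W a = join_cell act s U n (k a).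
Proof.
move=> [hW _]; have /choice[k hk] : forall a, exists k : nat -> nat, (a < size W)%N ->
    (forall i, (i < n)%N -> (k i < size U)%N) /\ nth set0 W a = join_cell act s U n k.
  move=> a; case: (ltnP a (size W)) => aW; last by exists id.
  by have [k hk] := hW a aW; exists k.
by exists k.
Qed.

End Joins.

Lemma covnum_join_refine (G : groupType) (T1 T2 : Type)
    (act1 : G -> T1 -> T1) (act2 : G -> T2 -> T2) (s : nat -> G)
    (U1 : seq (set T1)) (U2 : seq (set T2)) (n c : nat) (pi : T2 -> T1)
    (refine : (nat -> nat) -> nat -> nat -> nat) :
  (0 < c)%N -> covers U1 ->
  (forall k, (forall i, (i < n)%N -> (k i < size U1)%N) ->
     forall p i, (i < n)%N -> (refine k p i < size U2)%N) ->
  (forall k z, join_cell act1 s U1 n k (pi z) ->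
     exists2 p, (p < c)%N & join_cell act2 s U2 n (refine k p) z) ->
  covnum R (join_cover act2 s U2 n) <= c%:R * covnum R (join_cover act1 s U1 n).
Proof.
move=> c0 cU1 refineU2 refine_cover; apply: covnum_le_mul => //.
  exact: join_cover_subcover.
move=> W hW; have [k hk] := subcover_join_cells hW.
exists (mkseq (fun j => join_cell act2 s U2 n (refine (k (j %/ c)%N) (j %% c)%N)) (size W * c));
  last by rewrite size_mkseq mulnC.
split.
  move=> j; rewrite size_mkseq => jlt; rewrite nth_mkseq //; apply: join_cell_in.
  by apply: refineU2; apply: (hk _ _).1; rewrite ltn_divLR.
move=> z; have [a aW Wa] := hW.2 (pi z); rewrite (hk a aW).2 in Wa.
have [p pc zp] := refine_cover _ _ Wa.
have jlt : (a * c + p < size W * c)%N.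
  by rewrite (leq_trans (_ : _ < a * c + c)%N) ?ltn_add2l // -mulSnr leq_mul2r aW orbT.
exists (a * c + p)%N; first by rewrite size_mkseq.
by rewrite nth_mkseq // divnMDl // divn_small // addn0 modnMDl modn_small.
Qed.

End CoveringNumbers.

Section Limsup.
Variable R : realType.
Local Open Scope ereal_scope.
Implicit Types (u : (\bar R)^nat) (l : \bar R).

Lemma limn_esupE u : limn_esup u = ereal_inf (range (esups u)).
Proof. by rewrite limn_esup_lim; apply: cvg_lim => //; exact: cvg_esups_inf. Qed.

Lemma limn_esup_le_eventually u l :
  (exists N, forall n, (N <= n)%N -> u n <= l) -> limn_esup u <= l.
Proof.
move=> [N hN]; rewrite limn_esupE.
apply: (@le_trans _ _ (esups u N)); first by apply: ereal_inf_lbound; exists N.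
by apply: ge_ereal_sup => _ [k /= Nk <-]; exact: hN.
Qed.

Lemma limn_esup_lt_eventually u l :
  limn_esup u < l -> exists N, forall n, (N <= n)%N -> u n < l.
Proof.
rewrite limn_esupE => /ereal_inf_lt[_ [N _ <-]] lt; exists N => n Nn.
by apply: le_lt_trans lt; apply: ereal_sup_ubound; exists n.
Qed.

Lemma limn_esup_ge_often u l :
  (forall N, exists2 n, (N <= n)%N & l <= u n) -> l <= limn_esup u.
Proof.
move=> h; rewrite limn_esupE; apply: le_ereal_inf_tmp => _ [N _ <-].
have [n Nn ln] := h N; apply: le_trans ln _; apply: ereal_sup_ubound; exists n => //.
Qed.

End Limsup.

Lemma ln_lt_2sqrt (R : realType) (y : R) : 0 < y -> ln y < 2 * Num.sqrt y.
Proof.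
move=> y0; have sy : 0 < Num.sqrt y by rewrite sqrtr_gt0.
rewrite -{1}(sqr_sqrtr (ltW y0)) lnXn // mulr2n; have := ln_sublinear sy; lra.
Qed.

Lemma ln_poly_div_eventually_le (R : realType) (K d : nat) (e : R) : 0 < e ->
  exists N, forall n, (N <= n)%N -> d%:R * ln ((K * n).+1)%:R / n%:R <= e.
Proof.
move=> e0; pose A : R := 2 * (d.+1)%:R; pose dl := e / A.
have A0 : 0 < A by rewrite /A mulr_gt0 // ltr0n.
have dl0 : 0 < dl by rewrite divr_gt0.
pose N := (Num.bound ((K.+1)%:R / (dl ^+ 2))).+1.
have hN : (K.+1)%:R / (dl ^+ 2) < N%:R.
  apply: lt_le_trans (archi_boundP _) _; first by rewrite divr_ge0 // exprn_ge0 // ltW.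
  by rewrite ler_nat.
exists N => n Nn; have n0 : (0 < n)%N by apply: leq_trans Nn.
have n0R : 0 < n%:R :> R by rewrite ltr0n.
have dn0 : 0 <= dl * n%:R by rewrite mulr_ge0 ?ltW.
(* ln (K n + 1) < 2 sqrt (K n + 1) <= 2 dl n, once n >= (K + 1) / dl^2 *)
have sq : Num.sqrt ((K * n).+1)%:R <= dl * n%:R.
  rewrite -(ger0_norm dn0) -sqrtr_sqr ler_sqrt ?exprn_ge0 //.
  apply: le_trans (_ : (K.+1)%:R * n%:R <= _); first by rewrite -natrM ler_nat; nia.
  rewrite exprMn [n%:R ^+ 2]expr2 mulrA ler_wpM2r ?ltW // -ltr_pdivrMl ?exprn_gt0 //.
  by rewrite mulrC (lt_le_trans hN) ?ler_nat.
have lnle : ln ((K * n).+1)%:R <= 2 * (dl * n%:R).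
  by apply/ltW/(lt_le_trans (ln_lt_2sqrt (ltr0Sn R (K * n)))); rewrite ler_pM2l.
have dA : e = dl * A by rewrite /dl mulfVK // gt_eqF.
have dd : d%:R <= d.+1%:R :> R by rewrite ler_nat.
rewrite ler_pdivrMr // (le_trans (ler_wpM2l (ler0n R d) lnle)) //.
rewrite (le_trans (ler_wpM2r (mulr_ge0 (ler0n R 2) dn0) dd)) // dA /A.
by rewrite [X in _ <= X](_ : _ = d.+1%:R * (2 * (dl * n%:R))) //; ring.
Qed.

Section SequenceEntropy.
Context {R : realType} (G : groupType).

Lemma seq_entropy_ge0 (T : Type) (t : T) (act : G -> T -> T) s (U : seq (set T)) :
  covers U -> (0 <= seq_entropy R act s U)%E.
Proof.
move=> cU; apply: limn_esup_ge_often => N; exists N => //.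
rewrite lee_fin divr_ge0 //; apply/ln_ge0/(covnum_ge1 t).
exact: join_cover_subcover.
Qed.

Lemma seq_entropy_eq0_poly_bound (T1 T2 : Type) (t1 : T1) (t2 : T2)
    (act1 : G -> T1 -> T1) (act2 : G -> T2 -> T2) (s : nat -> G)
    (U1 : seq (set T1)) (U2 : seq (set T2)) (K d : nat) :
  covers U1 -> covers U2 ->
  (forall n, covnum R (join_cover act2 s U2 n) <=
               ((K * n).+1 ^ d)%:R * covnum R (join_cover act1 s U1 n)) ->
  seq_entropy R act1 s U1 = 0%E -> seq_entropy R act2 s U2 = 0%E.
Proof.
move=> cU1 cU2 bound h1; apply/eqP; rewrite eq_le (seq_entropy_ge0 t2) // andbT.
apply/lee_addgt0Pr => e e0; rewrite add0e.
have e20 : 0 < e / 2 by rewrite divr_gt0.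
have [N1 hN1] : exists N, forall n, (N <= n)%N ->
    ln (covnum R (join_cover act1 s U1 n)) / n%:R < e / 2.
  have /limn_esup_lt_eventually[N hN] : (seq_entropy R act1 s U1 < (e / 2)%:E)%E.
    by rewrite h1 lte_fin.
  by exists N => n /hN; rewrite lte_fin.
have [N2 hN2] := ln_poly_div_eventually_le K d e20.
apply: limn_esup_le_eventually; exists (maxn N1 (maxn N2 1)) => n.
rewrite !geq_max lee_fin => /and3P[/hN1 small1 /hN2 smallB n0].
have nR : 0 < n%:R :> R by rewrite ltr0n.
have N1ge1 : 1 <= covnum R (join_cover act1 s U1 n).
  by apply: (covnum_ge1 t1); exact: join_cover_subcover.
have N2ge1 : 1 <= covnum R (join_cover act2 s U2 n).
  by apply: (covnum_ge1 t2); exact: join_cover_subcover.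
have B0 : 0 < ((K * n).+1 ^ d)%:R :> R by rewrite ltr0n expn_gt0.
have lnB : ln ((K * n).+1 ^ d)%:R = d%:R * ln ((K * n).+1)%:R :> R.
  by rewrite natrX lnXn ?ltr0n // mulr_natl.
have N1pos := lt_le_trans ltr01 N1ge1; have N2pos := lt_le_trans ltr01 N2ge1.
have := bound n; rewrite -ler_ln ?posrE ?mulr_gt0 // lnM ?posrE // lnB => lnle.
apply: le_trans
  (_ : (d%:R * ln ((K * n).+1)%:R + ln (covnum R (join_cover act1 s U1 n))) / n%:R <= _).
  by rewrite ler_pM2r ?invr_gt0.
by rewrite mulrDl [e]splitr (lerD smallB (ltW small1)).
Qed.

End SequenceEntropy.

Section Independence.
Context {R : realType} (G : groupType).

Lemma indep_cell_sign (T : Type) (A1 A2 : set T) (b : bool) j y :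
  A1 `&` A2 = set0 -> (if b then A1 else A2) y -> nth set0 [:: A1; A2] j y ->
  b = (j == 0%N).
Proof.
move=> disj Ay Aj; have notboth : ~ (A1 `&` A2) y by rewrite disj.
case: j Aj => [|[|j]] /= Aj; last by rewrite nth_nil in Aj.
- by case: b Ay => // Ay; exfalso; apply: notboth.
- by case: b Ay => // Ay; exfalso; apply: notboth.
Qed.

Lemma covnum_join_indep (T : Type) (act : G -> T -> T) (s : nat -> G)
    (A1 A2 : set T) (M : seq G) (n : nat) :
  A1 `&` A2 = set0 -> covers [:: A1; A2] -> uniq M -> (0 < size M)%N ->
  indep_set act A1 A2 [set g | g \in M] ->
  (forall g, g \in M -> exists2 i, (i < n)%N & s i = g) ->
  (2 ^ size M)%:R <= covnum R (join_cover act s [:: A1; A2] n).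
Proof.
move=> disj cU uM M0 iM sM; apply: covnum_ge; first exact: join_cover_subcover.
move=> W hW; have [k hk] := subcover_join_cells hW.
pose Om := {ffun seq_sub M -> bool}.
have /choice[y hy] : forall w : Om, exists y,
    forall t : seq_sub M, (if w t then A1 else A2) (act (val t) y).
  move=> w; have fin : finite_set [set g | g \in M] by apply/finite_seqP; exists M.
  have ne : [set g | g \in M] !=set0 by exists (nth 1%g M 0); apply: mem_nth.
  have [y hy] := iM _ fin ne (@subset_refl _ _) (fun g => oapp w false (insub g)).
  by exists y => t; have := hy _ (valP t); rewrite valK.
have /choice[a ha] : forall w : Om, exists a, (a < size W)%N /\ nth set0 W a (y w).
  by move=> w; have [a ? ?] := hW.2 (y w); exists a.
pose F (w : Om) : 'I_(size W) := Ordinal (ha w).1.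
have Finj : injective F.
  move=> w w' /(congr1 val) /= e; apply/ffunP => t.
  have [i ilt si] := sM _ (valP t).
  have := (ha w).2; have := (ha w').2; rewrite -e (hk _ (ha w).1).2 /join_cell /=.
  move=> /(_ i ilt) cw' /(_ i ilt) cw; rewrite si in cw cw'.
  by rewrite (indep_cell_sign disj (hy w t) cw) (indep_cell_sign disj (hy w' t) cw').
have := leq_card F Finj.
by rewrite card_ffun card_bool card_seq_sub // card_ord.
Qed.

(* Blocks [Mf k] of length [2 ^ k] laid end to end: block [k] occupies the positions
   [2 ^ k - 1, ..., 2 ^ (k + 1) - 2]. *)
Definition block_concat (Mf : nat -> seq G) (p : nat) : G :=
  nth 1%g (Mf (trunc_log 2 p.+1)) (p.+1 - 2 ^ trunc_log 2 p.+1).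

Lemma block_concat_mem (Mf : nat -> seq G) k g : size (Mf k) = (2 ^ k)%N -> g \in Mf k ->
  exists2 i, (i < (2 ^ k.+1).-1)%N & block_concat Mf i = g.
Proof.
move=> sz gM; have tk : (index g (Mf k) < 2 ^ k)%N by rewrite -sz index_mem.
have k0 : (0 < 2 ^ k)%N by rewrite expn_gt0.
exists ((2 ^ k).-1 + index g (Mf k))%N; first by rewrite expnS; lia.
have e1 : ((2 ^ k).-1 + index g (Mf k)).+1 = (2 ^ k + index g (Mf k))%N.
  by rewrite -addSn prednK.
rewrite /block_concat e1 (@trunc_log_eq 2 k) ?addKn ?nth_index //.
by rewrite leq_addr expnS /=; lia.
Qed.

Lemma seq_entropy_ge_doubling (T : Type) (act : G -> T -> T) (s : nat -> G) (U : seq (set T)) :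
  (forall k, (2 ^ 2 ^ k)%:R <= covnum R (join_cover act s U (2 ^ k.+1).-1)) ->
  ((ln 2 / 2)%:E <= seq_entropy R act s U)%E.
Proof.
move=> key; apply: limn_esup_ge_often => N.
exists (2 ^ N.+1).-1; first by rewrite expnS; have := ltn_expl N (ltnSn 1); lia.
rewrite lee_fin; set n := (2 ^ N.+1).-1.
have n0 : (0 < n)%N by rewrite /n expnS; have := expn_gt0 2 N; lia.
have nR : 0 < n%:R :> R by rewrite ltr0n.
have ln20 : 0 < ln (2 : R) by rewrite ln_gt0 // ltr1n.
have lncov : ln (2 ^ 2 ^ N)%:R <= ln (covnum R (join_cover act s U n)).
  by rewrite ler_ln ?posrE ?ltr0n ?expn_gt0 // (lt_le_trans _ (key N)) ?ltr0n ?expn_gt0.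
rewrite natrX lnXn // in lncov.
have hn : n%:R <= 2 * (2 ^ N)%:R :> R by rewrite -natrM ler_nat /n expnS; lia.
rewrite ler_pdivlMr //; apply: le_trans lncov.
rewrite -[X in _ <= X]mulr_natr mulrAC ler_pdivrMr //; have := ler_wpM2l (ltW ln20) hn; lra.
Qed.

Lemma null_not_arb_large_indep (T : topologicalType) (act : G -> T -> T) (A1 A2 : set T) :
  open A1 -> open A2 -> A1 `&` A2 = set0 -> covers [:: A1; A2] ->
  null_action R act -> ~ arb_large_indep act A1 A2.
Proof.
move=> oA1 oA2 disj cU null arb.
have /choice[Mf hMf] : forall k, exists M : seq G,
    [/\ uniq M, size M = (2 ^ k)%N & indep_set act A1 A2 [set g | g \in M]].
  move=> k; have [M [uM [kM iM]]] := arb (2 ^ k)%N.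
  exists (take (2 ^ k) M); split; [exact: take_uniq | exact: size_takel |].
  by move=> F fF F0 FM; apply: iM => // g /FM /mem_take.
have oU : finite_open_cover [:: A1; A2] by split=> // -[|[|]].
have : ((ln 2 / 2)%:E <= seq_entropy R act (block_concat Mf) [:: A1; A2])%E.
  apply: seq_entropy_ge_doubling => k; have [uM sM iM] := hMf k.
  rewrite -sM; apply: covnum_join_indep => //; first by rewrite sM expn_gt0.
  by move=> g; apply: block_concat_mem.
by rewrite (null _ _ oU) lee_fin leNgt divr_gt0 ?ln_gt0 ?ltr1n.
Qed.

End Independence.

Lemma not_arb_large_indep_bound (G : groupType) (T : Type) (act : G -> T -> T) (A1 A2 : set T) :
  ~ arb_large_indep act A1 A2 -> exists d, forall M : seq G,
    uniq M -> (d <= size M)%N -> ~ indep_set act A1 A2 [set g | g \in M].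
Proof.
move=> noarb; apply: contrapT => large; apply: noarb => d; apply: contrapT => small.
by apply: large; exists d => M uM dM iM; apply: small; exists M.
Qed.

Section Traces.
Variables (G : groupType) (T : Type) (act : G -> T -> T).

Definition trace (A : set T) (L : seq G) (y : T) : {ffun seq_sub L -> bool} :=
  [ffun t => `[< A (act (val t) y) >]].

Definition traces (A : set T) (L : seq G) : {set {ffun seq_sub L -> bool}} :=
  [set p | `[< exists y, trace A L y = p >]].

Lemma trace_in_traces A L y : trace A L y \in traces A L.
Proof. by rewrite inE; apply/asboolP; exists y. Qed.

(* A set of group elements shattered by the traces is an independence set. *)
Lemma card_traces (A1 A2 : set T) (L : seq G) (d : nat) :
  uniq L -> (forall y, ~ A1 y -> A2 y) ->
  (forall M : seq G, uniq M -> (d <= size M)%N -> ~ indep_set act A1 A2 [set g | g \in M]) ->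
  (#|traces A1 L| <= (size L).+1 ^ d)%N.
Proof.
move=> uL A12 noindep; rewrite -(card_seq_sub uL); apply: sauer_shelah => I shI.
rewrite ltnNge; apply/negP => dI; apply: (noindep [seq val t | t <- enum I]).
- by rewrite map_inj_uniq ?enum_uniq //; exact: val_inj.
- by rewrite size_map -cardE.
move=> F _ _ FI omega.
have /forallP /(_ [ffun t => omega (val t)]) /existsP [p /andP [pS /forallP pI]] := shI.
move: pS; rewrite inE => /asboolP [y yp].
exists y => g /FI /mapP [t tI ->]; have := pI t; rewrite -mem_enum tI -yp !ffunE /=.
by case: (omega (val t)) => /eqP /asboolP; [|move/A12].
Qed.

End Traces.

Lemma open_level_set_pm1 (R : realType) (T : topologicalType) (h : T -> R) :
  continuous h -> (forall y, h y = 1 \/ h y = -1) -> forall c, open [set y | h y = c].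
Proof.
move=> hc hpm c; have openpre (B : set R) : open B -> open (h @^-1` B).
  by move=> oB; apply: open_comp => // y _; exact: hc.
have [->|c1] := eqVneq c 1.
  rewrite (_ : [set y | _] = h @^-1` [set r | r > 0]); first exact/openpre/open_gt.
  by apply/seteqP; split => y /=; [move=> -> | case: (hpm y) => ->]; rewrite ?ltr0N1.
have [->|c2] := eqVneq c (-1).
  rewrite (_ : [set y | _] = h @^-1` [set r | r < 0]); first exact/openpre/open_lt.
  apply/seteqP; split => y /=; first by move=> ->; rewrite ltrN10.
  by case: (hpm y) => ->; rewrite ?ltr10.
rewrite (_ : [set y | _] = set0); first exact: open0.
apply/seteqP; split => y //= hy.
by case: (hpm y); rewrite hy => e; [move: c1 | move: c2]; rewrite e eqxx.
Qed.

Definition pointed_copy (T : topologicalType) (t : T) : Type := T.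

Section PointedCopy.
Variables (T : topologicalType) (t : T).
HB.instance Definition _ := Topological.on (pointed_copy t).
HB.instance Definition _ := isPointed.Build (pointed_copy t) t.

(* [compact_cover] is stated for pointed spaces; any point of [T] will do. *)
Lemma compact_cover_compact (A : set T) : compact A -> cover_compact A.
Proof. by move=> cA; have : @compact (pointed_copy t) A := cA; rewrite compact_cover. Qed.
End PointedCopy.

Lemma compact_closed_image (Y X : topologicalType) (p : Y -> X) :
  continuous p -> compact [set: Y] -> hausdorff_space X ->
  forall C, closed C -> closed (p @` C).
Proof.
move=> pc Yc hX C Ccl; apply: compact_closed => //; apply: continuous_compact.
  exact: continuous_subspaceT.
exact: subclosed_compact Ccl Yc _.
Qed.

Lemma continuous_factor (R : realType) (Y X : topologicalType) (p : Y -> X) (sec : X -> Y)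
    (h : Y -> R) :
  continuous p -> compact [set: Y] -> hausdorff_space X -> cancel sec p ->
  (forall c, open [set y | h y = c]) -> (forall y y', p y = p y' -> h y = h y') ->
  continuous (h \o sec).
Proof.
move=> pc Yc hX secK hopen hfib x; apply: (near_cst_continuous (h (sec x))).
pose Z := p @` ~` [set y | h y = h (sec x)].
have oZ : open (~` Z) by apply/closed_openC/compact_closed_image => //; exact: open_closedC.
have Zx : (~` Z) x by move=> [y /= ny py]; apply: ny; apply: hfib; rewrite py secK.
apply: filterS (open_nbhs_nbhs (conj oZ Zx)) => x' nZ /=.
by apply: contrapT => ne; apply: nZ; exists (sec x').
Qed.

Lemma actionVK (G : groupType) (T : Type) (act : G -> T -> T) :
  is_action act -> forall g x, act g^-1%g (act g x) = x.
Proof. by move=> [act1 actM] g x; rewrite -actM mulVg act1. Qed.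

Lemma action_inj (G : groupType) (T : Type) (act : G -> T -> T) :
  is_action act -> forall g, injective (act g).
Proof. by move=> hact g x y e; rewrite -(actionVK hact g x) e actionVK. Qed.

Lemma null_factor (R : realType) (G : groupType) (Y X : topologicalType)
    (actY : G -> Y -> Y) (actX : G -> X -> X) (p : Y -> X) (x : X) :
  continuous p -> (forall x, exists y, p y = x) -> (forall g y, p (actY g y) = actX g (p y)) ->
  null_action R actY -> null_action R actX.
Proof.
move=> pc psurj peq null s U [oU cU]; have [sec secK] := choice psurj.
pose U' := [seq p @^-1` A | A <- U].
have oU' : finite_open_cover U'.
  split=> [i|y].
    rewrite size_map => iU; rewrite (nth_map set0) //.
    by apply: open_comp => [z _|]; [exact: pc | exact: oU].
  by have [i iU Ui] := cU (p y); exists i; rewrite ?size_map ?(nth_map set0).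
apply: (seq_entropy_eq0_poly_bound (sec x) x (K := 0) (d := 0) oU'.2 cU _ (null s U' oU')).
move=> n; rewrite expn0.
apply: (covnum_join_refine (c := 1) (pi := sec) (refine := fun k _ => k)) oU'.2 _ _ => //.
  by move=> k kU j i /kU; rewrite size_map.
move=> k z cell; exists 0%N => // i /cell; rewrite /U'.
have [iU|iU] := ltnP (k i) (size U); last by rewrite nth_default ?size_map.
by rewrite (nth_map set0) //= peq secK.
Qed.

Section McMahonExtension.
Variables (R : realType) (G : groupType) (X Xf : pseudoMetricType R).
Variables (act : G -> X -> X) (actf : G -> Xf -> Xf) (pif : Xf -> X).
Variables (x1 : X) (f : X -> R) (ft : Xf -> R).
Hypotheses (hXT2 : hausdorff_space X) (hXc : compact [set: X]) (hXfc : compact [set: Xf]).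
Hypotheses (hact : continuous_action act) (hactf : continuous_action actf).
Hypothesis hfext : ~ exists g : X -> R, continuous g /\ (forall x, g x = 1 \/ g x = -1) /\
                                       (forall x, x <> x1 -> g x = f x).
Hypotheses (hpic : continuous pif) (hpis : forall x, exists y, pif y = x)
  (hpieq : forall g y, pif (actf g y) = act g (pif y)).
Hypothesis hfib1 : forall x, ~ act_orbit act x1 x -> exists y, forall y', pif y' = x <-> y' = y.
Hypothesis hfib2 : forall x, act_orbit act x1 x ->
  exists y y', y <> y' /\ forall z, pif z = x <-> (z = y \/ z = y').
Hypotheses (hftc : continuous ft) (hftval : forall y, ft y = 1 \/ ft y = -1)
  (hftext : forall y, pif y <> x1 -> ft y = f (pif y)).

Lemma ft_act_level_open g c : open [set z | ft (actf g z) = c].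
Proof.
apply: (open_level_set_pm1 (h := ft \o actf g)) => [z|y]; last exact: hftval.
by apply: continuous_comp; [exact: hactf.2 | exact: hftc].
Qed.

(* Otherwise [ft] would be constant on every fibre and [f] would extend continuously. *)
Lemma fiber_x1_ft_neq a b : pif a = x1 -> pif b = x1 -> a <> b -> ft a <> ft b.
Proof.
move=> pa pb ab eab; apply: hfext.
have [y [y' [_ fib]]] : exists y y', y <> y' /\ forall z, pif z = x1 <-> (z = y \/ z = y').
  by apply: hfib2; exists 1%g => //; exact: hact.1.1.
have fibx1 z : pif z = x1 -> z = a \/ z = b.
  move=> /fib; have /fib := pa; have /fib := pb; clear -ab.
  by do 3!case=> ?; subst; first [by left | by right | by exfalso; apply: ab].
have ft_fib z z' : pif z = pif z' -> ft z = ft z'.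
  move=> e; case: (pif z =P x1) => [p1|pn]; last by rewrite !hftext -?e.
  have p1' : pif z' = x1 by rewrite -e.
  by case: (fibx1 _ p1) => ->; case: (fibx1 _ p1') => ->.
have [sec secK] := choice hpis.
exists (ft \o sec); split; [|split].
- exact: continuous_factor hpic hXfc hXT2 secK (open_level_set_pm1 hftc hftval) ft_fib.
- by move=> x; exact: hftval.
- by move=> x nx /=; rewrite hftext secK.
Qed.

Lemma fiber_separated x : exists g, forall z z', pif z = x -> pif z' = x ->
  ft (actf g z) = ft (actf g z') -> z = z'.
Proof.
case: (pselect (act_orbit act x1 x)) => [[g _ <-]|notorb]; last first.
  by have [y hy] := hfib1 notorb; exists 1%g => z z' /hy -> /hy ->.
exists g^-1%g => z z' pz pz' e; apply: contrapT => ne.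
have to_x1 w : pif w = act g x1 -> pif (actf g^-1%g w) = x1.
  by move=> pw; rewrite hpieq pw actionVK //; exact: hact.1.
apply: (fiber_x1_ft_neq (to_x1 _ pz) (to_x1 _ pz')) e => e'.
by apply: ne; exact: action_inj hactf.1 _ _ _ e'.
Qed.

Definition adapted (U : seq (set Xf)) (V : set X) (g : G) (m : R -> nat) :=
  forall c, (m c < size U)%N /\
    forall z, V (pif z) -> ft (actf g z) = c -> nth set0 U (m c) z.

(* Near the fibre over [x], the member of [U] containing a point is read off
   the sign of [ft] at [g] times that point, [g] separating the fibre. *)
Lemma exists_adapted_nbhd U : finite_open_cover U ->
  forall x, exists V g m, [/\ open V, V x & adapted U V g m].
Proof.
move=> [oU cU] x; have [g sep] := fiber_separated x.
have /choice[mf hmf] : forall z, exists j, (j < size U)%N /\ nth set0 U j z.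
  by move=> z; have [j ? ?] := cU z; exists j.
pose O := \bigcup_(z in [set z | pif z = x])
  (nth set0 U (mf z) `&` [set z' | ft (actf g z') = ft (actf g z)]).
have oO : open O.
  by apply: bigcup_open => z _; apply: openI; [exact: oU (hmf z).1 | exact: ft_act_level_open].
pose V := ~` (pif @` ~` O).
have inO z' : V (pif z') -> O z' by move=> Vz'; apply: contrapT => nO; apply: Vz'; exists z'.
have /choice[m hm] : forall c, exists j, (j < size U)%N /\
    forall z', V (pif z') -> ft (actf g z') = c -> nth set0 U j z'.
  move=> c; case: (pselect (exists2 z, pif z = x & ft (actf g z) = c)) => [[z pz ez]|nz].
    exists (mf z); split=> [|z' /inO [z'' pz'' [Uz' e'']] ez']; first exact: (hmf z).1.
    by have <- : z'' = z by apply: sep => //; rewrite -e'' ez' ez.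
  have [y0 _] := hpis x; have [j jU _] := cU y0.
  exists j; split=> // z' /inO [z'' pz'' [_ e'']] ez'; exfalso.
  by apply: nz; exists z'' => //; rewrite -e''.
exists V, g, m; split=> //.
  exact/closed_openC/compact_closed_image/open_closedC.
by move=> [w nOw pw]; apply: nOw; exists w => //; split; [exact: (hmf w).2 |].
Qed.

Lemma exists_finite_adapted_cover U : finite_open_cover U ->
  exists (D : seq X) (V : X -> set X) (g : X -> G) (m : X -> R -> nat),
    [/\ forall x, open (V x), covers [seq V x | x <- D] &
        forall x, adapted U (V x) (g x) (m x)].
Proof.
move=> oU; have /choice[V hV] := exists_adapted_nbhd oU.
have /choice[g hg] : forall x, exists g m, adapted U (V x) g m.
  by move=> x; have [g [m [_ _ ad]]] := hV x; exists g, m.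
have /choice[m hm] := hg.
have [] := compact_cover_compact x1 hXc (D := [set: X]) (f := V).
- by move=> x _; have [? [? []]] := hV x.
- by move=> x _; exists x => //; have [? [? []]] := hV x.
move=> D _ cover.
exists (finmap.enum_fset D), V, g, m; split=> // [x|y].
  by have [? [? []]] := hV x.
have [x xD Vy] := cover y I; exists (index x (finmap.enum_fset D)).
  by rewrite size_map index_mem.
by rewrite (nth_map x) ?index_mem // nth_index.
Qed.

Definition sign_at (L : seq G) (p : {ffun seq_sub L -> bool}) (h : G) : R :=
  oapp (fun t => if p t then 1 else -1) 1 (insub h : option (seq_sub L)).

Lemma covnum_join_le_traces U (D : seq X) V g m s n :
  covers [seq V x | x <- D] -> (forall x, adapted U (V x) (g x) (m x)) ->
  covnum R (join_cover actf s U n) <=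
    #|traces actf (ft @^-1` [set 1]) (undup [seq (g x * s i)%g | x <- D, i <- iota 0 n])|%:R *
    covnum R (join_cover act s [seq V x | x <- D] n).
Proof.
move=> cV adapt; set L := undup _; set S := traces _ _ L.
have [y1 _] := hpis x1.
have S0 : (0 < #|S|)%N.
  by rewrite card_gt0; apply/set0Pn; exists (trace actf (ft @^-1` [set 1]) L y1);
    exact: trace_in_traces.
pose p0 : {ffun seq_sub L -> bool} := [ffun=> false].
pose refine (k : nat -> nat) (p : nat) (i : nat) :=
  m (nth x1 D (k i)) (sign_at (nth p0 (enum S) p) (g (nth x1 D (k i)) * s i)%g).
apply: (covnum_join_refine (pi := pif) (refine := refine)) => //.
  by move=> k _ p i _; exact: (adapt _ _).1.
move=> k z cell; exists (index (trace actf (ft @^-1` [set 1]) L z) (enum S)).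
  by rewrite cardE index_mem mem_enum trace_in_traces.
move=> i ilt; have := cell i ilt.
have [kD|kD] := ltnP (k i) (size D); last by rewrite nth_default ?size_map.
set x := nth x1 D (k i); rewrite (nth_map x1) // -/x -hpieq => Vz.
apply: (adapt x _).2 => //.
have Lgs : (g x * s i)%g \in L.
  rewrite mem_undup; apply/allpairsP; exists (x, i); split=> //; first exact: mem_nth.
  by rewrite mem_iota.
rewrite nth_index ?mem_enum ?trace_in_traces // /sign_at insubT /= ffunE /=.
rewrite -hactf.1.2; case: (hftval (actf (g x * s i)%g z)) => ->.
  by case: asboolP.
by case: asboolP => // e; lra.
Qed.

Lemma null_extension : null_action R act ->
  ~ arb_large_indep actf (ft @^-1` [set 1]) (ft @^-1` [set -1]) -> null_action R actf.
Proof.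
move=> nullX noarb s U oU.
have [D [V [g [m [oV cV adapt]]]]] := exists_finite_adapted_cover oU.
have [d noindep] := not_arb_large_indep_bound noarb.
have [y1 _] := hpis x1.
have oV' : finite_open_cover [seq V x | x <- D].
  by split=> // i; rewrite size_map => iD; rewrite (nth_map x1).
apply: (seq_entropy_eq0_poly_bound x1 y1 (K := size D) (d := d) cV oU.2 _ (nullX s _ oV')).
move=> n; apply: le_trans (covnum_join_le_traces s n cV adapt) _.
apply: ler_wpM2r.
  by apply: le_trans (covnum_ge1 x1 (join_cover_subcover _ _ _ cV)).
rewrite ler_nat.
have signs y : ~ (ft @^-1` [set 1]) y -> (ft @^-1` [set -1]) y by case: (hftval y).
apply: leq_trans (card_traces (undup_uniq _) signs noindep) _.
have [->//|d0] := posnP d; rewrite leq_exp2r // ltnS.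
by rewrite (leq_trans (size_undup _)) // size_allpairs size_iota.
Qed.

End McMahonExtension.

Unset Implicit Arguments. Set Strict Implicit. Set Printing Implicit Defensive.

Theorem lemma3p2
  (R : realType)
  (* a countably infinite group *)
  (G : groupType) (hG : ([set: G] #= [set: nat])%card)
  (* minimal continuous action on a compact metrizable space X *)
  (X : pseudoMetricType R) (hXT2 : hausdorff_space X) (hXc : compact [set: X])
  (act : G -> X -> X) (hact : continuous_action act) (hmin : minimal_action act)
  (* more than one orbit *)
  (hmany : exists x y : X, ~ act_orbit act x y)
  (* x1 with trivial stabilizer *)
  (x1 : X) (hstab : forall g : G, act g x1 = x1 -> g = 1%g)
  (* f : X \ {x1} -> {1,-1} continuous, not continuously extendable *)
  (f : X -> R)
  (hfval : forall x, x <> x1 -> f x = 1 \/ f x = -1)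
  (hfc : {within ~` [set x1], continuous f})
  (hfext : ~ exists g : X -> R, continuous g /\ (forall x, g x = 1 \/ g x = -1) /\
                                (forall x, x <> x1 -> g x = f x))
  (* the McMahon extension pi_f : X_f -> X with tilde f *)
  (Xf : pseudoMetricType R) (hXfT2 : hausdorff_space Xf) (hXfc : compact [set: Xf])
  (actf : G -> Xf -> Xf) (hactf : continuous_action actf) (hminf : minimal_action actf)
  (pif : Xf -> X) (hpic : continuous pif) (hpis : forall x, exists y, pif y = x)
  (hpieq : forall g y, pif (actf g y) = act g (pif y))
  (hfib1 : forall x, ~ act_orbit act x1 x -> exists y, forall y', pif y' = x <-> y' = y)
  (hfib2 : forall x, act_orbit act x1 x ->
     exists y y', y <> y' /\ forall z, pif z = x <-> (z = y \/ z = y'))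
  (ft : Xf -> R) (hftc : continuous ft) (hftval : forall y, ft y = 1 \/ ft y = -1)
  (hftext : forall y, pif y <> x1 -> ft y = f (pif y)) :
  null_action R actf <->
  (null_action R act /\
   ~ arb_large_indep actf (ft @^-1` [set 1]) (ft @^-1` [set -1])).
Proof.
have ft_level c : open [set y | ft y = c] := open_level_set_pm1 hftc hftval c.
split=> [nullf | [nullX noindep]].
  split; first exact: null_factor x1 hpic hpis hpieq nullf.
  apply: null_not_arb_large_indep nullf; try exact: ft_level.
    by apply/seteqP; split=> y // [/= -> ]; lra.
  by move=> y; case: (hftval y) => e; [exists 0%N | exists 1%N].
exact: (null_extension hXT2 hXc hXfc hact hactf hfext hpic hpis hpieq hfib1 hfib2
          hftc hftval hftext).
Qed.
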